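(* Work in the Poincaré ball model of $\mathbb{H}^3$. For $a>1$ let $P_{3,4}(a)$ be the intersection of the open unit ball with the sets $H(ap)$ for all $p\in\{(\pm1,\pm1,\pm1)/\sqrt3\}$. Then: (1) For $a>\sqrt3$, the four spheres $S(a(\pm1,\pm1,1)/\sqrt3)$ have a common point $p$ with $|p|<1$, and $P_{3,4}(a)$ is a finite octahedron. For $a=\sqrt3$ the octahedron is ideal with dihedral angle $\pi/2$. As $a\to\infty$, the dihedral angle increases to $\arccos(-1/3)$, the dihedral angle of the Euclidean octahedron. (2) For $a=\sqrt{3/2}$, $S(a(1,1,1)/\sqrt3)$ and $S(a(1,-1,1)/\sqrt3)$ touch. (3) For $a<\sqrt{3/2}$, $S(a(1,1,1)/\sqrt3)$ and $S(a(1,-1,1)/\sqrt3)$ are disjoint. (4) For $a>\sqrt{3/2}$, $S(a(1,1,1)/\sqrt3)$ and $S(a(1,-1,1)/\sqrt3)$ meet at a dihedral angle $\alpha$ with $\cos\alpha=\frac{3-a^2}{3(a^2-1)}$. (5) For $\sqrt3>a>\sqrt{3/2}$, $P_{3,4}(a)$ is hyperideal.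
   Context: For $x\in\mathbb{R}^3$ with $|x|>1$, $S(x)$ is the sphere centered at $x$ with radius $\sqrt{|x|^2-1}$ (it meets the unit sphere orthogonally and represents a hyperbolic plane), and $H(x)$ is the unbounded component of $\mathbb{R}^3\setminus S(x)$. The octahedron is finite if the four face-spheres around a vertex meet inside the open unit ball, ideal if they meet on the unit sphere, and hyperideal if adjacent face-spheres intersect but the four spheres around a vertex have no common point in the closed unit ball. *)

From Stdlib Require Import Reals Lra.
Open Scope R_scope.

Record vec3 := mkV { vx : R; vy : R; vz : R }.

Definition vsub (u v : vec3) : vec3 := mkV (vx u - vx v) (vy u - vy v) (vz u - vz v).
Definition vscale (c : R) (u : vec3) : vec3 := mkV (c * vx u) (c * vy u) (c * vz u).
Definition dot (u v : vec3) : R := vx u * vx v + vy u * vy v + vz u * vz v.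
Definition norm2 (u : vec3) : R := dot u u.
Definition vnorm (u : vec3) : R := sqrt (norm2 u).

Definition srad (x : vec3) : R := sqrt (norm2 x - 1).

Definition onS (x p : vec3) : Prop := norm2 (vsub p x) = norm2 x - 1.

(* H(x): unbounded component of R^3 \ S(x), i.e. the exterior of the ball
   bounded by S(x) *)
Definition inH (x p : vec3) : Prop := norm2 (vsub p x) > norm2 x - 1.

Definition sg (b : bool) : R := if b then 1 else -1.

Definition fc (a : R) (b1 b2 b3 : bool) : vec3 :=
  vscale (a / sqrt 3) (mkV (sg b1) (sg b2) (sg b3)).

Definition P34 (a : R) (p : vec3) : Prop :=
  norm2 p < 1 /\ forall b1 b2 b3 : bool, inH (fc a b1 b2 b3) p.

(* The faces of P34 a lie on the spheres S(fc a b1 b2 b3).  The vertex of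
   the octahedron in direction (sign s) e_i is surrounded by the four faces
   whose i-th sign equals s. *)
Definition coord (i : nat) (b1 b2 b3 : bool) : bool :=
  match i with 0 => b1 | 1 => b2 | _ => b3 end.

Definition vertex_spheres_meet (Reg : vec3 -> Prop) (a : R) (i : nat) (s : bool) : Prop :=
  exists p, Reg p /\
    forall b1 b2 b3 : bool, coord i b1 b2 b3 = s -> onS (fc a b1 b2 b3) p.

Definition open_ball (p : vec3) : Prop := norm2 p < 1.
Definition unit_sphere (p : vec3) : Prop := norm2 p = 1.
Definition closed_ball (p : vec3) : Prop := norm2 p <= 1.

(* two face-spheres intersect (as hyperbolic planes: inside the open ball) *)
Definition planes_intersect (x y : vec3) : Prop :=
  exists p, open_ball p /\ onS x p /\ onS y p.

Definition adjacent_intersect (a : R) : Prop :=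
  forall b1 b2 b3 : bool,
    planes_intersect (fc a b1 b2 b3) (fc a (negb b1) b2 b3) /\
    planes_intersect (fc a b1 b2 b3) (fc a b1 (negb b2) b3) /\
    planes_intersect (fc a b1 b2 b3) (fc a b1 b2 (negb b3)).

Definition finite_oct (a : R) : Prop :=
  forall (i : nat) (s : bool), (i < 3)%nat -> vertex_spheres_meet open_ball a i s.

Definition ideal_oct (a : R) : Prop :=
  forall (i : nat) (s : bool), (i < 3)%nat -> vertex_spheres_meet unit_sphere a i s.

Definition hyperideal_oct (a : R) : Prop :=
  adjacent_intersect a /\
  forall (i : nat) (s : bool), (i < 3)%nat -> ~ vertex_spheres_meet closed_ball a i s.

Definition spheres_touch (x y : vec3) : Prop :=
  exists! p, onS x p /\ onS y p.

Definition spheres_disjoint (x y : vec3) : Prop :=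
  ~ exists p, onS x p /\ onS y p.

(* S(x) and S(y) meet at dihedral angle alpha: they meet (inside the ball),
   and at every common point q the angle of the region exterior to both
   spheres (the wedge bounded by them) is alpha; that angle is pi minus the
   angle between the outward unit normals (q-x)/r_x and (q-y)/r_y. *)
Definition meet_at_angle (x y : vec3) (alpha : R) : Prop :=
  0 <= alpha <= PI /\
  planes_intersect x y /\
  forall q, onS x q -> onS y q ->
    cos alpha = - (dot (vsub q x) (vsub q y) / (srad x * srad y)).

Definition oct_dihedral (a alpha : R) : Prop :=
  forall b1 b2 b3 : bool,
    meet_at_angle (fc a b1 b2 b3) (fc a (negb b1) b2 b3) alpha /\
    meet_at_angle (fc a b1 b2 b3) (fc a b1 (negb b2) b3) alpha /\
    meet_at_angle (fc a b1 b2 b3) (fc a b1 b2 (negb b3)) alpha.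

(** With [k = a / sqrt 3], the face-sphere [S(fc a s)] is the locus
    [|p|^2 + 1 = 2 k (s . p)], so everything reduces to quadratics in [k].
    Two adjacent face-spheres share the circle [p_j = 0],
    [(p_i - k s_i)^2 + (p_l - k s_l)^2 = 2 k^2 - 1], which is nonempty iff
    [a^2 >= 3/2] and meets the open ball iff [a^2 > 3/2].  Summing the four
    equations around a vertex gives [|p|^2 + 1 = 2 k s p_i], solvable iff
    [k >= 1], i.e. [a >= sqrt 3], with the solution on the axis at distance
    [k - sqrt (k^2 - 1)] from the origin.  At a common point [q] of [S(x)] and
    [S(y)] one has [(q - x) . (q - y) = x . y - 1], which gives
    [cos alpha = (3 - a^2) / (3 (a^2 - 1))]; this decreases to [-1/3]. *)

From Stdlib Require Import Reals Lra Lia Psatz.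
Open Scope R_scope.

Lemma sqr_gt_of_sqrt_lt c a : 0 <= c -> sqrt c < a -> c < a * a.
Proof. intros Hc H. pose proof (sqrt_sqrt c Hc). pose proof (sqrt_pos c). nra. Qed.

Lemma sqr_ge_of_sqrt_le c a : 0 <= c -> sqrt c <= a -> c <= a * a.
Proof. intros Hc H. pose proof (sqrt_sqrt c Hc). pose proof (sqrt_pos c). nra. Qed.

Lemma sqr_lt_of_lt_sqrt c a : 0 <= c -> 0 <= a -> a < sqrt c -> a * a < c.
Proof. intros Hc Ha H. pose proof (sqrt_sqrt c Hc). nra. Qed.

Lemma smaller_root k c : 0 < k -> 0 < c < k * k ->
  exists u, u * u + c = 2 * k * u /\ 0 < u /\ u * u < c.
Proof.
  intros Hk Hc.
  pose (s := sqrt (k * k - c)).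
  assert (Hs2 : s * s = k * k - c) by (apply sqrt_sqrt; lra).
  assert (Hs : 0 < s) by (apply sqrt_lt_R0; lra).
  assert (Hsk : s < k) by nra.
  (* (k - s) (k + s) = c and k - s < k + s *)
  exists (k - s). nra.
Qed.

Lemma dot_sub_common_point x y q : onS x q -> onS y q ->
  dot (vsub q x) (vsub q y) = dot x y - 1.
Proof. unfold onS, norm2, dot, vsub; simpl; intros Hx Hy; nra. Qed.

Lemma meet_at_angle_of_cos x y alpha :
  norm2 x = norm2 y -> 1 < norm2 x -> 0 <= alpha <= PI -> planes_intersect x y ->
  cos alpha = (1 - dot x y) / (norm2 x - 1) -> meet_at_angle x y alpha.
Proof.
  intros Hxy Hx Halpha Hint Hcos.
  split; [exact Halpha | split; [exact Hint |]].
  intros q Hqx Hqy.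
  assert (Hrad : srad x * srad y = norm2 x - 1)
    by (unfold srad; rewrite <- Hxy; apply sqrt_sqrt; lra).
  rewrite Hcos, Hrad, (dot_sub_common_point x y q Hqx Hqy).
  field. lra.
Qed.

Lemma face_scale_sq a : (a / sqrt 3) * (a / sqrt 3) = a * a / 3.
Proof.
  pose proof Rlt_sqrt3_0.
  rewrite <- (sqrt_sqrt 3) at 3 by lra.
  field; lra.
Qed.

Lemma onS_fc a b1 b2 b3 p :
  onS (fc a b1 b2 b3) p <->
  norm2 p + 1 = 2 * (a / sqrt 3) * (sg b1 * vx p + sg b2 * vy p + sg b3 * vz p).
Proof. unfold onS, fc, norm2, dot, vsub, vscale; simpl; split; intro; nra. Qed.

Lemma norm2_fc a b1 b2 b3 : norm2 (fc a b1 b2 b3) = a * a.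
Proof.
  pose proof (face_scale_sq a).
  unfold fc, norm2, dot, vscale; destruct b1, b2, b3; simpl; nra.
Qed.

Lemma dot_fc_adjacent a b1 b2 b3 :
  dot (fc a b1 b2 b3) (fc a (negb b1) b2 b3) = a * a / 3 /\
  dot (fc a b1 b2 b3) (fc a b1 (negb b2) b3) = a * a / 3 /\
  dot (fc a b1 b2 b3) (fc a b1 b2 (negb b3)) = a * a / 3.
Proof.
  pose proof (face_scale_sq a).
  unfold fc, dot, vscale; destruct b1, b2, b3; simpl; repeat split; nra.
Qed.

Lemma adjacent_intersect_of_sqr a : 0 < a -> 3 / 2 < a * a -> adjacent_intersect a.
Proof.
  intros Ha Ha2.
  pose proof (face_scale_sq a) as Hk2.
  assert (Hk : 0 < a / sqrt 3) by (apply Rdiv_lt_0_compat; [lra | apply Rlt_sqrt3_0]).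
  destruct (smaller_root (a / sqrt 3) (1 / 2)) as [u [Hu [Hu0 Hu1]]]; [lra | nra |].
  intros b1 b2 b3; split; [|split];
    [ exists (mkV 0 (u * sg b2) (u * sg b3))
    | exists (mkV (u * sg b1) 0 (u * sg b3))
    | exists (mkV (u * sg b1) (u * sg b2) 0) ];
    (split; [| split; rewrite onS_fc]);
    unfold open_ball, norm2, dot; destruct b1, b2, b3; simpl; nra.
Qed.

Lemma adjacent_common_point a p : 0 < a ->
  onS (fc a true true true) p -> onS (fc a true false true) p ->
  vy p = 0 /\
  (vx p - a / sqrt 3) * (vx p - a / sqrt 3) + (vz p - a / sqrt 3) * (vz p - a / sqrt 3)
  = 2 * (a * a / 3) - 1.
Proof.
  intros Ha H1 H2.
  rewrite onS_fc in H1, H2; simpl in H1, H2.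
  rewrite <- face_scale_sq.
  assert (Hk : 0 < a / sqrt 3) by (apply Rdiv_lt_0_compat; [lra | apply Rlt_sqrt3_0]).
  set (k := a / sqrt 3) in *.
  assert (Hy : vy p = 0) by (apply (Rmult_eq_reg_l (4 * k)); lra).
  split; [exact Hy |].
  unfold norm2, dot in H1; rewrite Hy in H1; nra.
Qed.

Lemma adjacent_spheres_touch a : 0 < a -> a * a = 3 / 2 ->
  spheres_touch (fc a true true true) (fc a true false true).
Proof.
  intros Ha Ha2.
  set (k := a / sqrt 3).
  assert (Hk2 : k * k = 1 / 2) by (unfold k; rewrite face_scale_sq; lra).
  exists (mkV k 0 k). split.
  - split; rewrite onS_fc; fold k; unfold norm2, dot; simpl; nra.
  - intros [x y z] [H1 H2].
    destruct (adjacent_common_point a _ Ha H1 H2) as [Hy Hcirc]; simpl in Hy, Hcirc.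
    fold k in Hcirc. rewrite Ha2 in Hcirc.
    (* the circle of common points degenerates to the point (k, 0, k) *)
    destruct (Rplus_sqr_eq_0 (x - k) (z - k)) as [Hx Hz]; [unfold Rsqr; lra |].
    replace x with k by lra. replace z with k by lra. subst y. reflexivity.
Qed.

Lemma adjacent_spheres_disjoint a : 0 < a -> a * a < 3 / 2 ->
  spheres_disjoint (fc a true true true) (fc a true false true).
Proof.
  intros Ha Ha2 [p [H1 H2]].
  destruct (adjacent_common_point a p Ha H1 H2) as [_ Hcirc].
  pose proof (Rle_0_sqr (vx p - a / sqrt 3)). pose proof (Rle_0_sqr (vz p - a / sqrt 3)).
  unfold Rsqr in *. lra.
Qed.

Lemma vertex_spheres_meet_on_axis (Reg : vec3 -> Prop) a t i s :
  t * t + 1 = 2 * (a / sqrt 3) * t -> (forall p, norm2 p = t * t -> Reg p) ->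
  (i < 3)%nat -> vertex_spheres_meet Reg a i s.
Proof.
  intros Ht HReg Hi.
  destruct i as [|[|[|i]]];
    [ exists (mkV (t * sg s) 0 0)
    | exists (mkV 0 (t * sg s) 0)
    | exists (mkV 0 0 (t * sg s))
    | lia ];
    (split;
      [ apply HReg; unfold norm2, dot; destruct s; simpl; ring
      | intros b1 b2 b3 <-; rewrite onS_fc; unfold norm2, dot;
        destruct b1, b2, b3; simpl; nra ]).
Qed.

Lemma vertex_spheres_never_meet (Reg : vec3 -> Prop) a i s :
  a * a < 3 -> ~ vertex_spheres_meet Reg a i s.
Proof.
  intros Ha [p [_ Hp]].
  assert (Hk : a / sqrt 3 * (a / sqrt 3) < 1) by (rewrite face_scale_sq; lra).
  destruct i as [|[|i]];
    [ pose proof (Hp s true true eq_refl); pose proof (Hp s true false eq_refl);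
      pose proof (Hp s false true eq_refl); pose proof (Hp s false false eq_refl)
    | pose proof (Hp true s true eq_refl); pose proof (Hp true s false eq_refl);
      pose proof (Hp false s true eq_refl); pose proof (Hp false s false eq_refl)
    | pose proof (Hp true true s eq_refl); pose proof (Hp true false s eq_refl);
      pose proof (Hp false true s eq_refl); pose proof (Hp false false s eq_refl) ];
    clear Hp; rewrite !onS_fc in *; set (k := a / sqrt 3) in *;
    unfold norm2, dot in *; destruct s; simpl in *.
  (* the four equations sum to |p|^2 + 1 = 2 k s p_i, i.e. (p_i - k s)^2 + ... = k^2 - 1 *)
  all: pose proof (Rle_0_sqr (vx p - k)); pose proof (Rle_0_sqr (vx p + k));
    pose proof (Rle_0_sqr (vy p - k)); pose proof (Rle_0_sqr (vy p + k));
    pose proof (Rle_0_sqr (vz p - k)); pose proof (Rle_0_sqr (vz p + k));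
    pose proof (Rle_0_sqr (vx p)); pose proof (Rle_0_sqr (vy p)); pose proof (Rle_0_sqr (vz p));
    unfold Rsqr in *; lra.
Qed.

Lemma finite_oct_of_sqr a : 0 < a -> 3 < a * a -> finite_oct a.
Proof.
  intros Ha Ha3 i s Hi.
  assert (Hk : 0 < a / sqrt 3) by (apply Rdiv_lt_0_compat; [lra | apply Rlt_sqrt3_0]).
  destruct (smaller_root (a / sqrt 3) 1 Hk) as [t [Ht [_ Ht1]]].
  { rewrite face_scale_sq. lra. }
  apply (vertex_spheres_meet_on_axis _ a t); [lra | | exact Hi].
  intros p Hp. unfold open_ball. lra.
Qed.

Lemma ideal_oct_sqrt3 : ideal_oct (sqrt 3).
Proof.
  intros i s Hi.
  apply (vertex_spheres_meet_on_axis _ (sqrt 3) 1); [| | exact Hi].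
  - pose proof Rlt_sqrt3_0. field_simplify; lra.
  - intros p Hp. unfold unit_sphere. lra.
Qed.

Definition dihedral_cos (a : R) : R := (3 - a ^ 2) / (3 * (a ^ 2 - 1)).

Definition oct_angle (a : R) : R := acos (dihedral_cos a).

Lemma dihedral_cos_as_inv a : 1 < a * a ->
  exists d, 0 < d /\ d * (a * a - 1) = 1 /\ dihedral_cos a = (2 * d - 1) / 3.
Proof.
  intros Ha. exists (/ (a * a - 1)).
  split; [apply Rinv_0_lt_compat; lra | split; [apply Rinv_l; lra |]].
  unfold dihedral_cos. field. lra.
Qed.

Lemma dihedral_cos_gt a : 1 < a * a -> -1/3 < dihedral_cos a.
Proof. intros Ha. destruct (dihedral_cos_as_inv a Ha) as [d [Hd [_ ->]]]. lra. Qed.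

Lemma dihedral_cos_lt a : 3/2 < a * a -> dihedral_cos a < 1.
Proof.
  intros Ha. destruct (dihedral_cos_as_inv a ltac:(lra)) as [d [Hd [Hinv ->]]]. nra.
Qed.

Lemma dihedral_cos_decreasing a1 a2 : 1 < a1 * a1 < a2 * a2 ->
  dihedral_cos a2 < dihedral_cos a1.
Proof.
  intros Ha.
  destruct (dihedral_cos_as_inv a1 ltac:(lra)) as [d1 [Hd1 [Hinv1 ->]]].
  destruct (dihedral_cos_as_inv a2 ltac:(lra)) as [d2 [Hd2 [Hinv2 ->]]].
  nra.
Qed.

Lemma cos_oct_angle a : 3/2 < a * a -> cos (oct_angle a) = dihedral_cos a.
Proof.
  intros. pose proof (dihedral_cos_gt a). pose proof (dihedral_cos_lt a).
  apply cos_acos; lra.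
Qed.

Lemma oct_dihedral_oct_angle a : 0 < a -> 3/2 < a * a -> oct_dihedral a (oct_angle a).
Proof.
  intros Ha Ha2 b1 b2 b3.
  destruct (adjacent_intersect_of_sqr a Ha Ha2 b1 b2 b3) as [I1 [I2 I3]].
  destruct (dot_fc_adjacent a b1 b2 b3) as [D1 [D2 D3]].
  assert (Hcos : cos (oct_angle a) = (1 - a * a / 3) / (a * a - 1)).
  { rewrite cos_oct_angle by lra. unfold dihedral_cos. field. lra. }
  pose proof (acos_bound (dihedral_cos a)).
  split; [| split]; apply meet_at_angle_of_cos;
    rewrite ?norm2_fc, ?D1, ?D2, ?D3; solve [assumption | lra].
Qed.

Lemma acos_decreasing x y : -1 <= x -> x < y -> y <= 1 -> acos y < acos x.
Proof.
  intros. pose proof (acos_bound x); pose proof (acos_bound y).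
  apply cos_decreasing_0; try lra.
  rewrite !cos_acos; lra.
Qed.

Lemma oct_angle_increasing a1 a2 : 3/2 < a1 * a1 -> 0 <= a1 < a2 ->
  oct_angle a1 < oct_angle a2.
Proof.
  intros. assert (a1 * a1 < a2 * a2) by nra.
  pose proof (dihedral_cos_gt a2). pose proof (dihedral_cos_lt a1).
  apply acos_decreasing; try lra.
  apply dihedral_cos_decreasing; lra.
Qed.

Lemma oct_angle_lt a : 3/2 < a * a -> oct_angle a < acos (-1/3).
Proof.
  intros. pose proof (dihedral_cos_gt a). pose proof (dihedral_cos_lt a).
  apply acos_decreasing; lra.
Qed.

Lemma oct_angle_limit eps : 0 < eps ->
  exists M, forall a, a > M -> Rabs (oct_angle a - acos (-1/3)) < eps.
Proof.
  intros Heps.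
  assert (Hcont : continuity_pt acos (-1/3))
    by (apply derivable_continuous_pt, derivable_pt_acos; lra).
  destruct (Hcont eps Heps) as [delta [Hdelta Hnear]].
  exists (1 + / delta). intros a Ha.
  pose proof (Rinv_r delta ltac:(lra)).
  assert (0 < / delta) by (apply Rinv_0_lt_compat; lra).
  assert (Haa : / delta < a * a - 1) by nra.
  destruct (dihedral_cos_as_inv a ltac:(nra)) as [d [Hd [Hinv Hcos]]].
  assert (Hd_delta : d < delta) by nra.
  apply (Hnear (dihedral_cos a)). split.
  - split; [exact I | lra].
  - simpl; unfold R_dist; rewrite Rabs_right; lra.
Qed.

Lemma oct_angle_sqrt3 : oct_angle (sqrt 3) = PI / 2.
Proof.
  unfold oct_angle, dihedral_cos. rewrite pow2_sqrt by lra.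
  replace ((3 - 3) / (3 * (3 - 1))) with 0 by field.
  exact acos_0.
Qed.

Theorem mainTheorem18 :
  (* (1) *)
  (forall a : R, a > sqrt 3 ->
     (exists p : vec3, norm2 p < 1 /\
        forall b1 b2 : bool, onS (fc a b1 b2 true) p) /\
     finite_oct a) /\
  (ideal_oct (sqrt 3) /\ oct_dihedral (sqrt 3) (PI / 2)) /\
  (exists f : R -> R,
     (forall a : R, a >= sqrt 3 -> oct_dihedral a (f a)) /\
     (forall a1 a2 : R, sqrt 3 <= a1 -> a1 < a2 -> f a1 < f a2) /\
     (forall a : R, a >= sqrt 3 -> f a < acos (-1/3)) /\
     (forall eps : R, eps > 0 -> exists M : R, forall a : R, a > M ->
        Rabs (f a - acos (-1/3)) < eps)) /\
  (* (2) *)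
  spheres_touch (fc (sqrt (3/2)) true true true) (fc (sqrt (3/2)) true false true) /\
  (* (3) *)
  (forall a : R, 1 < a < sqrt (3/2) ->
     spheres_disjoint (fc a true true true) (fc a true false true)) /\
  (* (4) *)
  (forall a : R, a > sqrt (3/2) ->
     exists alpha : R,
       meet_at_angle (fc a true true true) (fc a true false true) alpha /\
       cos alpha = (3 - a ^ 2) / (3 * (a ^ 2 - 1))) /\
  (* (5) *)
  (forall a : R, sqrt (3/2) < a < sqrt 3 -> hyperideal_oct a).
Proof.
  pose proof Rlt_sqrt3_0 as H3.
  assert (H32 : 0 < sqrt (3 / 2)) by (apply sqrt_lt_R0; lra).
  split; [| split; [| split; [| split; [| split; [| split]]]]].
  - intros a Ha.
    pose proof (sqr_gt_of_sqrt_lt 3 a ltac:(lra) Ha).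
    assert (Hfin : finite_oct a) by (apply finite_oct_of_sqr; lra).
    split; [| exact Hfin].
    destruct (Hfin 2%nat true ltac:(lia)) as [p [Hp Hon]].
    exists p. split; [exact Hp | intros b1 b2; exact (Hon b1 b2 true eq_refl)].
  - split; [exact ideal_oct_sqrt3 |].
    rewrite <- oct_angle_sqrt3.
    apply oct_dihedral_oct_angle; [lra | rewrite sqrt_sqrt; lra].
  - exists oct_angle.
    split; [| split; [| split]]; [intros a Ha | intros a1 a2 Ha1 Ha2 | intros a Ha | exact oct_angle_limit].
    + pose proof (sqr_ge_of_sqrt_le 3 a ltac:(lra) ltac:(lra)).
      apply oct_dihedral_oct_angle; lra.
    + pose proof (sqr_ge_of_sqrt_le 3 a1 ltac:(lra) Ha1).
      apply oct_angle_increasing; lra.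
    + pose proof (sqr_ge_of_sqrt_le 3 a ltac:(lra) ltac:(lra)).
      apply oct_angle_lt; lra.
  - apply adjacent_spheres_touch; [lra | apply sqrt_sqrt; lra].
  - intros a [Ha1 Ha2].
    apply adjacent_spheres_disjoint; [lra | apply sqr_lt_of_lt_sqrt; lra].
  - intros a Ha.
    pose proof (sqr_gt_of_sqrt_lt (3 / 2) a ltac:(lra) Ha).
    exists (oct_angle a). split.
    + apply (oct_dihedral_oct_angle a ltac:(lra) ltac:(lra) true true true).
    + apply cos_oct_angle; lra.
  - intros a [Ha1 Ha2].
    pose proof (sqr_gt_of_sqrt_lt (3 / 2) a ltac:(lra) Ha1).
    split.
    + apply adjacent_intersect_of_sqr; lra.
    + intros i s _. apply vertex_spheres_never_meet, sqr_lt_of_lt_sqrt; lra.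
Qed.
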